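(* Let $X$ be a finite nonempty alphabet and $\mathcal{L}\subseteq 2^{X^*}$ a nontrivial, WP-recursive language family closed under finite unions, finite intersections and complementation. Let $(C,\mathbf{A})$ be a conditional classification problem with $\mathbf{A}=(A_1,\dots,A_k)$, $C$ recursive, and for each $1\le i\le k$: $A_i$ recursive and $A_i\notin\mathit{cclass}_1(C,\mathcal{L})$. Then there exists $\mathbf{B}=(B_1,\dots,B_k)$ with $\mathbf{B}\le\mathbf{A}$, $\mathbf{B}\in\mathit{ccore}_k(C,\mathcal{L})$, and each $B_i$ recursive.
   Context: $\mathcal{L}$ is nontrivial if $\emptyset,X^*\in\mathcal{L}$ and for all $Q\in\mathcal{L}$ and finite $E\subseteq X^*$ both $Q\cup E\in\mathcal{L}$ and $Q\setminus E\in\mathcal{L}$. $\mathcal{L}$ is WP-recursive if there is a surjection $e:\mathbb{N}_0\to\mathcal{L}$ such that the predicate ''$w\in e(i)$'' (for $i\in\mathbb{N}_0$, $w\in X^*$) is decidable uniformly in $i,w$. A classification problem is a vector $(A_1,\dots,A_k)$, $k\ge1$, of pairwise disjoint infinite subsets of $X^*$, of length $k$. A conditional classification problem is a pair $(C,\mathbf{A})$ with $C\subseteq X^*$, $\mathbf{A}$ a classification problem and $C$ disjoint from all components of $\mathbf{A}$. For vectors $\mathbf{B}=(B_1,\dots,B_m)$, $\mathbf{Q}=(Q_1,\dots,Q_k)$, $\mathbf{B}\le\mathbf{Q}$ means $1\le m\le k$ and there is an injective $\sigma:\{1,\dots,m\}\to\{1,\dots,k\}$ with $B_i\subseteq Q_{\sigma(i)}$.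 An $\mathcal{L}$-partition is a vector of pairwise disjoint members of $\mathcal{L}$ whose union is $X^*$. $\mathit{cclass}_k(C,\mathcal{L})$ is the set of classification problems $\mathbf{A}$ of length $k$ such that $(C,\mathbf{A})$ is a conditional classification problem and there is an $\mathcal{L}$-partition $(Q_0,Q_1,\dots,Q_k)$ with $C\subseteq Q_0$ and $\mathbf{A}\le(Q_1,\dots,Q_k)$ (a single set $A$ is identified with $(A)$). $\mathit{ccore}_k(C,\mathcal{L})$ is the set of classification problems $\mathbf{A}$ of length $k$ with $(C,\mathbf{A})$ a conditional classification problem such that every classification problem $\mathbf{A}'\le\mathbf{A}$ (any length $\ge1$) satisfies $\mathbf{A}'\notin\mathit{cclass}_{|\mathbf{A}'|}(C,\mathcal{L})$. *)

From mathcomp Require Import all_boot.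
Set Implicit Arguments. Unset Strict Implicit. Unset Printing Implicit Defensive.

Inductive recf : Type :=
| RZero
| RSucc
| RProj (i : nat)
| RComp (f : recf) (gs : seq recf)
| RPrec (f g : recf)
| RMin (f : recf).

Inductive eval : recf -> seq nat -> nat -> Prop :=
| eZero v : eval RZero v 0
| eSucc x v : eval RSucc (x :: v) x.+1
| eProj i v : i < size v -> eval (RProj i) v (nth 0 v i)
| eComp f gs v ys y : evals gs v ys -> eval f ys y -> eval (RComp f gs) v y
| ePrec0 f g v y : eval f v y -> eval (RPrec f g) (0 :: v) y
| ePrecS f g n v r y :
    eval (RPrec f g) (n :: v) r -> eval g (n :: r :: v) y ->
    eval (RPrec f g) (n.+1 :: v) y
| eMin f v n :
    eval f (n :: v) 0 ->
    (forall m, m < n -> exists k, eval f (m :: v) k.+1) ->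
    eval (RMin f) v n
with evals : seq recf -> seq nat -> seq nat -> Prop :=
| esNil v : evals [::] v [::]
| esCons g gs v y ys : eval g v y -> evals gs v ys -> evals (g :: gs) v (y :: ys).

Definition lang (X : finType) := seq X -> Prop.

(* standard bijective base-|X| numbering of words, used to feed words to
   recursive functions *)
Definition wcode (X : finType) (w : seq X) : nat :=
  foldr (fun x n => (enum_rank x).+1 + #|X| * n) 0 w.

Definition recursive (X : finType) (A : lang X) : Prop :=
  exists c : recf, forall w,
    (A w -> eval c [:: wcode w] 1) /\ (~ A w -> eval c [:: wcode w] 0).

Definition nontrivial (X : finType) (L : lang X -> Prop) : Prop :=
  [/\ L (fun _ => False), L (fun _ => True) &
      forall Q, L Q -> forall E : seq (seq X),
        L (fun w => Q w \/ w \in E) /\ L (fun w => Q w /\ w \notin E)].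

Definition WP_recursive (X : finType) (L : lang X -> Prop) : Prop :=
  exists e : nat -> lang X,
    [/\ (forall i, L (e i)), (forall Q, L Q -> exists i, e i = Q) &
        exists c : recf, forall i w,
          (e i w -> eval c [:: i; wcode w] 1) /\
          (~ e i w -> eval c [:: i; wcode w] 0)].

Definition closed_union (X : finType) (L : lang X -> Prop) : Prop :=
  forall Q R, L Q -> L R -> L (fun w => Q w \/ R w).
Definition closed_inter (X : finType) (L : lang X -> Prop) : Prop :=
  forall Q R, L Q -> L R -> L (fun w => Q w /\ R w).
Definition closed_compl (X : finType) (L : lang X -> Prop) : Prop :=
  forall Q, L Q -> L (fun w => ~ Q w).

Definition infinite_lang (X : finType) (A : lang X) : Prop :=
  forall s : seq (seq X), exists w, A w /\ w \notin s.

Definition class_problem (X : finType) (k : nat) (A : 'I_k -> lang X) : Prop :=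
  [/\ 1 <= k,
      (forall i j, i != j -> forall w, A i w -> A j w -> False) &
      (forall i, infinite_lang (A i))].

Definition cond_class_problem (X : finType) (C : lang X) (k : nat)
  (A : 'I_k -> lang X) : Prop :=
  class_problem A /\ (forall i w, C w -> A i w -> False).

Definition vle (X : finType) (m : nat) (B : 'I_m -> lang X) (k : nat)
  (Q : 'I_k -> lang X) : Prop :=
  (1 <= m <= k) /\
  exists sigma : 'I_m -> 'I_k, injective sigma /\
    forall i w, B i w -> Q (sigma i) w.

Definition L_partition (X : finType) (L : lang X -> Prop) (n : nat)
  (Q : 'I_n -> lang X) : Prop :=
  [/\ (forall i, L (Q i)),
      (forall i j, i != j -> forall w, Q i w -> Q j w -> False) &
      (forall w, exists i, Q i w)].

Definition cclass (X : finType) (L : lang X -> Prop) (C : lang X) (k : nat)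
  (A : 'I_k -> lang X) : Prop :=
  cond_class_problem C A /\
  exists Q : 'I_k.+1 -> lang X,
    [/\ L_partition L Q, (forall w, C w -> Q ord0 w) &
        vle A (fun i : 'I_k => Q (lift ord0 i))].

Definition ccore (X : finType) (L : lang X -> Prop) (C : lang X) (k : nat)
  (A : 'I_k -> lang X) : Prop :=
  cond_class_problem C A /\
  forall (m : nat) (A' : 'I_m -> lang X),
    class_problem A' -> vle A' A -> ~ cclass L C A'.

(* Fix a recursive enumeration e_0, e_1, ... of L.  For each i we thin A_i out to
   a recursive infinite B_i that meets every member of L disjoint from C in a
   finite set.  The n-th element of B_i is the first word beyond the previous
   one that lies in A_i and avoids every e_j (j < n) not yet seen to meet C;
   such a word exists because the e_j (j < n) disjoint from C have a union R in
   L, and if A_i \ R were finite, R plus finitely many words would separate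
   A_i from C, i.e. A_i would lie in cclass_1(C, L).  A member e_j of L disjoint
   from C then contains at most the first j+1 elements of B_i.  Consequently no
   infinite subproblem of (B_1, ..., B_k) can be classified by an L-partition,
   since the block containing one of its components would be such an e_j. *)

From mathcomp Require Import all_boot boolp.

Set Implicit Arguments. Unset Strict Implicit. Unset Printing Implicit Defensive.

Definition computes (n : nat) (f : recf) (F : seq nat -> nat) : Prop :=
  forall v, size v = n -> eval f v (F v).

Definition computable (n : nat) (F : seq nat -> nat) : Prop :=
  exists f, computes n f F.

Lemma computable_ext n F G :
  computable n F -> (forall v, size v = n -> F v = G v) -> computable n G.
Proof. by move=> [f Hf] FG; exists f => v Hv; rewrite -FG //; apply: Hf. Qed.

Lemma computable_proj n i : i < n -> computable n (fun v => nth 0 v i).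
Proof. by move=> lt_in; exists (RProj i) => v Hv; apply: eProj; rewrite Hv. Qed.
Arguments computable_proj : clear implicits.

Lemma computable_comp1 n F G :
  computable 1 F -> computable n G -> computable n (fun v => F [:: G v]).
Proof.
move=> [f Hf] [g Hg]; exists (RComp f [:: g]) => v Hv.
by apply: (eComp (ys := [:: G v])); [apply: esCons (Hg _ Hv) (esNil _) | apply: Hf].
Qed.

Lemma computable_comp2 n F G1 G2 :
  computable 2 F -> computable n G1 -> computable n G2 ->
  computable n (fun v => F [:: G1 v; G2 v]).
Proof.
move=> [f Hf] [g1 Hg1] [g2 Hg2]; exists (RComp f [:: g1; g2]) => v Hv.
apply: (eComp (ys := [:: G1 v; G2 v])); last exact: Hf.
by apply: esCons (Hg1 _ Hv) (esCons (Hg2 _ Hv) (esNil _)).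
Qed.

Lemma computable_comp3 n F G1 G2 G3 :
  computable 3 F -> computable n G1 -> computable n G2 -> computable n G3 ->
  computable n (fun v => F [:: G1 v; G2 v; G3 v]).
Proof.
move=> [f Hf] [g1 Hg1] [g2 Hg2] [g3 Hg3]; exists (RComp f [:: g1; g2; g3]) => v Hv.
apply: (eComp (ys := [:: G1 v; G2 v; G3 v])); last exact: Hf.
by apply: esCons (Hg1 _ Hv) (esCons (Hg2 _ Hv) (esCons (Hg3 _ Hv) (esNil _))).
Qed.

Lemma computable_succ n G : computable n G -> computable n (fun v => (G v).+1).
Proof.
apply: (computable_comp1 (F := fun u => (head 0 u).+1)).
by exists RSucc => -[|x []] //= _; apply: eSucc.
Qed.

Lemma computable_const n c : computable n (fun _ => c).
Proof.
elim: c => [|c IH]; last exact: computable_succ.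
by exists RZero => v _; apply: eZero.
Qed.
Arguments computable_const : clear implicits.

Fixpoint primrec (F G : seq nat -> nat) (m : nat) (v : seq nat) : nat :=
  if m is m'.+1 then G [:: m', primrec F G m' v & v] else F v.

Lemma computable_prec n F G : computable n F -> computable n.+2 G ->
  computable n.+1 (fun v => primrec F G (head 0 v) (behead v)).
Proof.
move=> [f Hf] [g Hg]; exists (RPrec f g) => -[|m v] //= [Hv].
elim: m => [|m IH] /=; first exact: ePrec0 (Hf _ Hv).
by apply: ePrecS IH (Hg _ _); rewrite /= Hv.
Qed.

(* A test is primitive recursion on its first argument that ignores the
   recursive value. *)
Lemma computable_ifz n F G H :
  computable n F -> computable n G -> computable n H ->
  computable n (fun v => if F v is 0 then G v else H v).
Proof.
have ifz : computable 3 (fun v => if head 0 v is 0 then nth 0 v 1 else nth 0 v 2).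
  apply: computable_ext (computable_prec (computable_proj 2 0 erefl)
                                         (computable_proj 4 3 erefl)) _.
  by move=> [|[|c] [|x [|y [|]]]].
exact: computable_comp3 ifz.
Qed.

Lemma computable_negb n (P : seq nat -> bool) :
  computable n (fun v => P v : nat) -> computable n (fun v => ~~ P v : nat).
Proof.
move=> HP; apply: computable_ext
  (computable_ifz HP (computable_const n 1) (computable_const n 0)) _.
by move=> v _; case: (P v).
Qed.

Lemma computable_andb n (P Q : seq nat -> bool) :
  computable n (fun v => P v : nat) -> computable n (fun v => Q v : nat) ->
  computable n (fun v => P v && Q v : nat).
Proof.
move=> HP HQ; apply: computable_ext (computable_ifz HP (computable_const n 0) HQ) _.
by move=> v _; case: (P v).
Qed.

Lemma computable_orb n (P Q : seq nat -> bool) :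
  computable n (fun v => P v : nat) -> computable n (fun v => Q v : nat) ->
  computable n (fun v => P v || Q v : nat).
Proof.
move=> HP HQ; apply: computable_ext (computable_ifz HP HQ (computable_const n 1)) _.
by move=> v _; case: (P v).
Qed.

Lemma computable_subn : computable 2 (fun v => nth 0 v 1 - nth 0 v 0).
Proof.
have pred : computable 1 (fun v => (head 0 v).-1).
  apply: computable_ext (computable_prec (computable_const 0 0)
                                         (computable_proj 2 0 erefl)) _.
  by move=> [|[|m] []].
apply: computable_ext (computable_prec (computable_proj 1 0 erefl)
    (computable_comp1 pred (computable_proj 3 1 erefl))) _.
move=> [|m [|x []]] //= _; elim: m => [|m IH] /=; first by rewrite subn0.
by rewrite IH subnS.
Qed.

Lemma computable_ltn n F G : computable n F -> computable n G ->
  computable n (fun v => F v < G v : nat).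
Proof.
move=> HF HG; apply: computable_ext (computable_ifz (computable_comp2 computable_subn HF HG)
  (computable_const n 0) (computable_const n 1)) _.
by move=> v _ /=; rewrite -subn_gt0; case: (G v - F v).
Qed.

Lemma computable_eqn n F G : computable n F -> computable n G ->
  computable n (fun v => F v == G v : nat).
Proof.
move=> HF HG; apply: computable_ext (computable_andb
  (computable_negb (computable_ltn HF HG)) (computable_negb (computable_ltn HG HF))) _.
by move=> v _; rewrite -!leqNgt eq_sym -eqn_leq.
Qed.

Lemma computable_has (P : nat -> nat -> bool) :
  computable 2 (fun v => P (nth 0 v 0) (nth 0 v 1) : nat) ->
  computable 2 (fun v => has (P^~ (nth 0 v 1)) (iota 0 (nth 0 v 0)) : nat).
Proof.
move=> HP.
have step : computable 3 (fun v => (0 < nth 0 v 1) || P (nth 0 v 0) (nth 0 v 2) : nat).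
  apply: computable_orb.
    exact: computable_ltn (computable_const 3 0) (computable_proj 3 1 erefl).
  exact: computable_comp2 HP (computable_proj 3 0 erefl) (computable_proj 3 2 erefl).
apply: computable_ext (computable_prec (computable_const 1 0) step) _.
move=> [|m [|p []]] //= _; elim: m => [|m IH] //.
by rewrite -(addn1 m) iotaD has_cat /= orbF addn1 /= IH lt0b.
Qed.

Lemma computable_mu n (P : seq nat -> bool) :
  computable n.+1 (fun v => P v : nat) ->
  (forall v, size v = n -> exists x, P (x :: v)) ->
  exists2 M, computable n M & forall v, size v = n -> P (M v :: v).
Proof.
move=> HP Pex; have [f Hf] := computable_negb HP.
pose M v := if pselect (exists x, P (x :: v)) is left ex then ex_minn ex else 0.
have MP v : size v = n -> P (M v :: v) /\ forall m, m < M v -> ~~ P (m :: v).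
  move=> Hv; rewrite /M; case: pselect => [ex|]; last by move/(_ (Pex v Hv)).
  case: ex_minnP => x Px minx; split=> // m ltmx; apply/negP => Pm.
  by move: (minx _ Pm); rewrite leqNgt ltmx.
exists M => [|v /MP[] //]; exists (RMin f) => v Hv; have [PM Mmin] := MP v Hv.
apply: eMin => [|m /Mmin nPm]; first by have := Hf (M v :: v); rewrite /= Hv PM; apply.
by exists 0; have := Hf (m :: v); rewrite /= Hv nPm; apply.
Qed.

Lemma wcode_inj (X : finType) : injective (@wcode X).
Proof.
elim=> [|x s IH] [|y t] //=.
have := ltn_ord (enum_rank x); have := ltn_ord (enum_rank y).
set K := #|X| => ltyK ltxK; rewrite !addSn => -[E].
have Emod : enum_rank x = enum_rank y :> nat.
  move/(congr1 (modn^~ K)): E => /=.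
  by rewrite ![K * _]mulnC !(addnC (nat_of_ord _)) !modnMDl !modn_small.
have Ediv : wcode s = wcode t.
  move/(congr1 (divn^~ K)): E => /=; have K_gt0 : 0 < K by apply: leq_ltn_trans ltxK.
  by rewrite ![K * _]mulnC !(addnC (nat_of_ord _)) !divnMDl // !divn_small // !addn0.
by rewrite (IH _ Ediv) (enum_rank_inj (val_inj Emod)).
Qed.

Lemma wcode_onto (X : finType) : 0 < #|X| -> forall n, exists w : seq X, wcode w = n.
Proof.
move=> X_gt0 n; elim: n {-2}n (leqnn n) => [|N IH] [|m] le_mN; try by exists [::].
have ltmK : m %% #|X| < #|X| by rewrite ltn_pmod.
have [t Ht] : exists t : seq X, wcode t = m %/ #|X|.
  by apply: IH; apply: leq_trans (leq_div _ _) _; rewrite -ltnS.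
exists (enum_val (Ordinal ltmK) :: t); rewrite /= enum_valK /= Ht.
by rewrite addSn mulnC addnC -divn_eq.
Qed.

Definition wdecode {X : finType} (n : nat) : seq X :=
  if pselect (exists w : seq X, wcode w == n) is left ex then xchoose ex else [::].

Lemma wdecodeK (X : finType) : 0 < #|X| -> cancel (@wdecode X) (@wcode X).
Proof.
move=> X_gt0 n; rewrite /wdecode; case: pselect => [ex | []]; first exact/eqP/(xchooseP ex).
by have [w <-] := wcode_onto X_gt0 n; exists w.
Qed.

Lemma wcodeK (X : finType) : cancel (@wcode X) (@wdecode X).
Proof.
move=> w; rewrite /wdecode; case: pselect => [ex | []]; last by exists w.
exact/wcode_inj/eqP/(xchooseP ex).
Qed.

Lemma recursive_computable (X : finType) (A : lang X) : 0 < #|X| ->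
  recursive A -> computable 1 (fun v => `[< A (wdecode (head 0 v)) >] : nat).
Proof.
move=> X_gt0 [c Hc]; exists c => -[|x []] //= _.
have [inA ninA] := Hc (wdecode x); rewrite wdecodeK // in inA ninA.
by case: asboolP => [/inA | /ninA].
Qed.

Lemma computable_recursive (X : finType) (A : lang X) (P : nat -> bool) :
  computable 1 (fun v => P (head 0 v) : nat) -> (forall w, A w <-> P (wcode w)) ->
  recursive A.
Proof.
move=> [c Hc] AP; exists c => w; have := Hc [:: wcode w] erefl.
case: (boolP (P (wcode w))) => Pw Ec; split=> Aw //; first by case: Aw; apply/AP.
by move/AP: Aw; rewrite (negbTE Pw).
Qed.

Section IncreasingRange.

Variables (X : finType) (f : nat -> nat).
Hypothesis f_incr : forall n, f n < f n.+1.

Lemma leq_incr n : n <= f n.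
Proof. by elim: n => // n IH; apply: leq_ltn_trans IH (f_incr n). Qed.

Lemma range_infinite : 0 < #|X| -> infinite_lang (fun w : seq X => exists n, f n = wcode w).
Proof.
move=> X_gt0 s; pose N := (\max_(u <- s) wcode u).+1.
exists (wdecode (f N)); split; first by exists N; rewrite wdecodeK.
apply/negP => /(leq_bigmax_seq (F := @wcode X) (P := xpredT) _)/(_ isT).
by rewrite wdecodeK // leqNgt (leq_trans (leqnn N) (leq_incr N)).
Qed.

Lemma range_recursive : 0 < #|X| -> computable 1 (fun v => f (head 0 v)) ->
  recursive (fun w : seq X => exists n, f n = wcode w).
Proof.
move=> X_gt0 Hf.
have Heq : computable 2 (fun v => f (nth 0 v 0) == nth 0 v 1 : nat).
  exact: computable_eqn (computable_comp1 Hf (computable_proj 2 0 erefl))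
                        (computable_proj 2 1 erefl).
have Hhas := computable_comp2 (computable_has (P := fun z x => f z == x) Heq)
  (computable_succ (computable_proj 1 0 erefl)) (computable_proj 1 0 erefl).
apply: (computable_recursive (P := fun x => has (fun z => f z == x) (iota 0 x.+1))).
  by apply: computable_ext Hhas _ => -[|x []].
move=> w; split => [[n fn] | /hasP[n _ /eqP fn]]; last by exists n.
by apply/hasP; exists n; [rewrite mem_iota ltnS -fn leq_incr | apply/eqP].
Qed.

End IncreasingRange.

Definition avoids (X : finType) (C Q : lang X) : Prop := forall w, C w -> ~ Q w.

Definition meets_finitely (X : finType) (L : lang X -> Prop) (C B : lang X) : Prop :=
  forall Q, L Q -> avoids C Q -> exists s : seq (seq X), forall w, B w -> Q w -> w \in s.

Section SparseSubset.

Variables (X : finType) (L : lang X -> Prop) (C A : lang X) (e : nat -> lang X).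
Hypotheses (X_gt0 : 0 < #|X|) (L_empty : L (fun _ => False))
  (L_add_finite : forall Q (E : seq (seq X)), L Q -> L (fun w => Q w \/ w \in E))
  (L_union : closed_union L).
Hypotheses (e_L : forall i, L (e i)) (e_onto : forall Q, L Q -> exists i, e i = Q).
Hypotheses (C_rec : recursive C) (A_rec : recursive A)
  (e_rec : exists c, forall i w,
     (e i w -> eval c [:: i; wcode w] 1) /\ (~ e i w -> eval c [:: i; wcode w] 0)).
Hypotheses (CA_disjoint : avoids C A)
  (A_inseparable : ~ exists Q, [/\ L Q, avoids C Q & forall w, A w -> Q w]).

Definition in_C x := `[< C (wdecode x) >].
Definition in_A x := `[< A (wdecode x) >].
Definition in_e j x := `[< e j (wdecode x) >].

Definition meetsC_below j x := has (fun c => in_C c && in_e j c) (iota 0 x).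

(* [x] may be the n-th element of the thinned set: it lies in [A], and each
   [e j] (j < n) containing [x] is already known to meet [C] below [x]. *)
Definition admissible n x :=
  in_A x && all (fun j => in_e j x ==> meetsC_below j x) (iota 0 n).

Lemma in_e_computable : computable 2 (fun v => in_e (nth 0 v 0) (nth 0 v 1) : nat).
Proof.
have [c Hc] := e_rec; exists c => -[|j [|x []]] //= _.
have [ejx nejx] := Hc j (wdecode x); rewrite wdecodeK // in ejx nejx.
by rewrite /in_e; case: asboolP => [/ejx | /nejx].
Qed.

Lemma meetsC_belowP j x :
  reflect (exists2 c, c < x & C (wdecode c) /\ e j (wdecode c)) (meetsC_below j x).
Proof.
apply: (iffP hasP) => -[c].
  by rewrite mem_iota => /andP[_ ltcx] /andP[/asboolP Cc /asboolP ejc]; exists c.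
move=> ltcx [Cc ejc]; exists c; first by rewrite mem_iota ltcx.
by apply/andP; split; apply/asboolP.
Qed.

Lemma L_avoiding_union n : L (fun w => exists2 j, j < n & avoids C (e j) /\ e j w).
Proof.
elim: n => [|n IH].
  rewrite (_ : (fun w => _) = fun _ => False) //.
  by apply/funext => w; apply/propext; split => // -[].
set S := (fun w => exists2 j, j < n & _) in IH.
have Sn w : (exists2 j, j < n.+1 & avoids C (e j) /\ e j w) <-> S w \/ avoids C (e n) /\ e n w.
  split => [[j] | [[j ltjn Hj] | Hn]]; [|by exists j => //; apply: ltnW | by exists n].
  by rewrite ltnS leq_eqVlt => /orP[/eqP-> | ltjn Hj]; [right | left; exists j].
case: (pselect (avoids C (e n))) => [avn | navn].
  rewrite (_ : (fun w => _) = fun w => S w \/ e n w); first exact: L_union.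
  by apply/funext => w; apply/propext; rewrite Sn; tauto.
rewrite (_ : (fun w => _) = S) //.
by apply/funext => w; apply/propext; rewrite Sn; tauto.
Qed.

Lemma meetsC_below_bound n :
  exists T, forall j, j < n -> ~ avoids C (e j) -> meetsC_below j T.
Proof.
elim: n => [|n [T HT]]; first by exists 0.
case: (pselect (avoids C (e n))) => [avn | navn].
  by exists T => j; rewrite ltnS leq_eqVlt => /orP[/eqP-> // | ]; apply: HT.
have [u [Cu enu]] : exists u, C u /\ e n u.
  by apply: contrapT => nu; apply: navn => u Cu enu; apply: nu; exists u.
exists (maxn T (wcode u).+1) => j; rewrite ltnS leq_eqVlt => /orP[/eqP-> _ | ltjn /(HT j ltjn)].
  by apply/meetsC_belowP; exists (wcode u); rewrite ?leq_max ?leqnn ?orbT ?wcodeK.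
by case/meetsC_belowP => c ltcT Hc; apply/meetsC_belowP; exists c; rewrite // leq_max ltcT.
Qed.

Lemma A_minus_separator_unbounded R : L R -> avoids C R ->
  forall m, exists w, [/\ A w, ~ R w & m < wcode w].
Proof.
move=> LR CR m; apply: contrapT => nw; apply: A_inseparable.
pose E := [seq u <- map wdecode (iota 0 m.+1) | `[< A u >]].
exists (fun w => R w \/ w \in E); split; first exact: L_add_finite.
  move=> w Cw [/(CR w Cw) // |]; rewrite mem_filter => /andP[/asboolP Aw _].
  exact: CA_disjoint Cw Aw.
move=> w Aw; case: (pselect (R w)) => [Rw | nRw]; [by left | right].
rewrite mem_filter; apply/andP; split; first exact/asboolP.
rewrite -(wcodeK w) map_f // mem_iota leq0n add0n ltnS leqNgt.
by apply/negP => ltmw; apply: nw; exists w.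
Qed.

Lemma admissible_exists n m : exists2 x, m < x & admissible n x.
Proof.
have [T HT] := meetsC_below_bound n.
have [|w [Aw nRw ltw]] := A_minus_separator_unbounded (L_avoiding_union n) _ (maxn m T).
  by move=> u Cu [j _ [avj eju]]; apply: avj Cu eju.
exists (wcode w); first exact: leq_ltn_trans (leq_maxl m T) ltw.
apply/andP; split; first by rewrite /in_A wcodeK; apply/asboolP.
apply/allP => j; rewrite mem_iota leq0n add0n => ltjn /=.
apply/implyP; rewrite /in_e wcodeK => /asboolP ejw.
have navj : ~ avoids C (e j) by move=> avj; apply: nRw; exists j.
have /meetsC_belowP[c ltcT Hc] := HT j ltjn navj; apply/meetsC_belowP; exists c => //.
exact: leq_trans ltcT (ltnW (leq_ltn_trans (leq_maxr m T) ltw)).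
Qed.

Lemma admissible_computable :
  computable 2 (fun v => admissible (nth 0 v 1) (nth 0 v 0) : nat).
Proof.
have in_A_comp := recursive_computable X_gt0 A_rec.
have in_C_comp := recursive_computable X_gt0 C_rec.
have meets_comp : computable 2 (fun v => meetsC_below (nth 0 v 1) (nth 0 v 0) : nat).
  apply: (computable_has (P := fun c j => in_C c && in_e j c)); apply: computable_andb.
    exact: computable_comp1 in_C_comp (computable_proj 2 0 erefl).
  exact: computable_comp2 in_e_computable (computable_proj 2 1 erefl) (computable_proj 2 0 erefl).
have bad_comp : computable 2 (fun v =>
    ~~ (in_e (nth 0 v 0) (nth 0 v 1) ==> meetsC_below (nth 0 v 0) (nth 0 v 1)) : nat).
  apply: computable_negb; apply: computable_ext (computable_orb
    (computable_negb in_e_computable)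
    (computable_comp2 meets_comp (computable_proj 2 1 erefl) (computable_proj 2 0 erefl))) _.
  by move=> v _ /=; case: in_e.
have all_comp := computable_negb (computable_has
  (P := fun j x => ~~ (in_e j x ==> meetsC_below j x)) bad_comp).
apply: computable_ext (computable_andb
  (computable_comp1 in_A_comp (computable_proj 2 0 erefl))
  (computable_comp2 all_comp (computable_proj 2 1 erefl) (computable_proj 2 0 erefl))) _.
move=> v _; rewrite /admissible -all_predC; congr (nat_of_bool (_ && _)).
by apply: eq_all => j /=; rewrite negbK.
Qed.

Lemma admissible_sequence : exists bs : nat -> nat,
  [/\ computable 1 (fun v => bs (head 0 v)), forall n, bs n < bs n.+1
    & forall n, admissible n (bs n)].
Proof.
have search_comp : computable 3
    (fun v => (nth 0 v 2 < nth 0 v 0) && admissible (nth 0 v 1) (nth 0 v 0) : nat).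
  apply: computable_andb.
    exact: computable_ltn (computable_proj 3 2 erefl) (computable_proj 3 0 erefl).
  exact: computable_comp2 admissible_computable
    (computable_proj 3 0 erefl) (computable_proj 3 1 erefl).
have [M M_comp MP] : exists2 M, computable 2 M & forall v, size v = 2 ->
    (nth 0 v 1 < M v) && admissible (nth 0 v 0) (M v).
  apply: computable_mu search_comp _ => v _.
  by have [x ltx adx] := admissible_exists (nth 0 v 0) (nth 0 v 1); exists x; apply/andP.
pose bs n := primrec (fun _ => M [:: 0; 0]) (fun u => M [:: (nth 0 u 0).+1; nth 0 u 1]) n [::].
exists bs; split.
- apply: computable_ext (computable_prec (computable_const 0 (M [:: 0; 0]))
    (computable_comp2 M_comp (computable_succ (computable_proj 2 0 erefl))
                             (computable_proj 2 1 erefl))) _.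
  by move=> [|x []].
- by move=> n; have /andP[] := MP [:: n.+1; bs n] erefl.
- by case=> [|n]; [have /andP[] := MP [:: 0; 0] erefl | have /andP[] := MP [:: n.+1; bs n] erefl].
Qed.

Lemma sparse_recursive_subset : exists B : lang X,
  [/\ forall w, B w -> A w, infinite_lang B, recursive B & meets_finitely L C B].
Proof.
have [bs [bs_comp bs_incr bs_adm]] := admissible_sequence.
exists (fun w => exists n, bs n = wcode w); split.
- by move=> w [n bsn]; have /andP[/asboolP] := bs_adm n; rewrite bsn wcodeK.
- exact: range_infinite.
- exact: range_recursive.
move=> Q LQ CQ; have [j ejQ] := e_onto LQ; subst Q.
exists (map (fun n => wdecode (bs n)) (iota 0 j.+1)) => w [n bsn] ejw.
rewrite -(wcodeK w) -bsn; apply: (map_f (fun n => wdecode (bs n))).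
rewrite mem_iota leq0n add0n ltnS leqNgt.
apply/negP => ltjn; have /andP[_ /allP/(_ j)] := bs_adm n.
rewrite mem_iota leq0n add0n ltjn => /(_ isT)/implyP.
rewrite /in_e bsn wcodeK => /(_ (introT (asboolP _) ejw))/meetsC_belowP[c _ [Cc ejc]].
exact: CQ Cc ejc.
Qed.

End SparseSubset.

Lemma cclass1_of_separator (X : finType) (L : lang X -> Prop) (C A Q : lang X) :
  closed_compl L -> infinite_lang A -> avoids C A ->
  L Q -> avoids C Q -> (forall w, A w -> Q w) -> cclass L C (fun _ : 'I_1 => A).
Proof.
move=> L_compl A_inf CA LQ CQ AQ; split.
  split=> [|_ w Cw]; last exact: CA.
  by split=> // i j; rewrite (ord1 i) (ord1 j) eqxx.
exists (fun j : 'I_2 => if j == ord0 then (fun w => ~ Q w) else Q); split.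
- split.
  + by move=> j; case: ifP => _; [apply: L_compl | ].
  + by move=> [[|[|?]] ?] [[|[|?]] ?].
  + by move=> w; case: (pselect (Q w)) => [Qw | nQw]; [exists (lift ord0 ord0) | exists ord0].
- by move=> w Cw /=; apply: CQ.
- by split=> //; exists id; split=> // i w /AQ; rewrite (negbTE (neq_lift _ _)).
Qed.

Lemma cond_class_problem_sub (X : finType) (C : lang X) k (A B : 'I_k -> lang X) :
  cond_class_problem C A -> (forall i w, B i w -> A i w) ->
  (forall i, infinite_lang (B i)) -> cond_class_problem C B.
Proof.
move=> [[k_gt0 A_disj _] CA] BA B_inf; split; last by move=> i w Cw /BA; apply: CA.
by split=> // i j neq_ij w /BA Aiw /BA; apply: A_disj neq_ij w Aiw.
Qed.

Lemma ccore_of_meets_finitely (X : finType) (L : lang X -> Prop) (C : lang X) k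
    (B : 'I_k -> lang X) :
  cond_class_problem C B -> (forall i, meets_finitely L C (B i)) -> ccore L C B.
Proof.
move=> ccB B_thin; split=> // m A' [m_gt0 _ A'_inf] [_ [s [_ A'B]]].
move=> [_ [Q [[LQ Q_disj _] CQ [_ [t [_ A'Q]]]]]].
pose i0 : 'I_m := Ordinal m_gt0; pose j0 := lift ord0 (t i0).
have [|u finu] := B_thin (s i0) (Q j0) (LQ j0).
  by move=> w Cw; apply: Q_disj (neq_lift ord0 (t i0)) w (CQ w Cw).
have [w [A'w]] := A'_inf i0 u.
by rewrite (finu w (A'B i0 w A'w) (A'Q i0 w A'w)).
Qed.

Theorem theorem5p4 (X : finType) (L : lang X -> Prop) (C : lang X) (k : nat)
  (A : 'I_k -> lang X) :
  0 < #|X| ->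
  nontrivial L -> WP_recursive L ->
  closed_union L -> closed_inter L -> closed_compl L ->
  cond_class_problem C A ->
  recursive C ->
  (forall i, recursive (A i)) ->
  (forall i, ~ cclass L C (fun _ : 'I_1 => A i)) ->
  exists B : 'I_k -> lang X,
    [/\ vle B A, ccore L C B & forall i, recursive (B i)].
Proof.
move=> X_gt0 [L_empty _ L_fin] [e [e_L e_onto e_rec]] L_union _ L_compl ccA C_rec A_rec A_ncc.
have [[k_gt0 _ A_inf] CA] := ccA.
have L_add_finite Q (E : seq (seq X)) : L Q -> L (fun w => Q w \/ w \in E).
  by move/L_fin => /(_ E) [].
have sparse i : exists B : lang X,
    [/\ forall w, B w -> A i w, infinite_lang B, recursive B & meets_finitely L C B].
  have CAi : avoids C (A i) by move=> w Cw; apply: CA Cw.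
  apply: (sparse_recursive_subset X_gt0 L_empty L_add_finite L_union e_L e_onto
            C_rec (A_rec i) e_rec CAi).
  move=> [Q [LQ CQ AQ]]; apply: (A_ncc i).
  exact: cclass1_of_separator L_compl (A_inf i) CAi LQ CQ AQ.
have [B HB] := choice sparse.
have BA i w : B i w -> A i w by case: (HB i) => + _ _ _; apply.
exists B; split.
- by split; [rewrite k_gt0 leqnn | exists id; split; [exact: inj_id | exact: BA]].
- apply: ccore_of_meets_finitely => [|i]; last by case: (HB i).
  by apply: cond_class_problem_sub ccA BA _ => i; case: (HB i).
- by move=> i; case: (HB i).
Qed.
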